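(* Let $A$ be a $B$-module algebra and $V$ a $B$-equivariant $A$-bimodule. Let $J_n(A,B,V)=\sum_{b\in B}{\rm im}\big([L_b,\partial_{n+1}]:{\rm CH}_{n+1}(A,V)\to{\rm CH}_n(A,V)\big)$. Then $J_*(A,B,V)$ is both a differential graded $k$-submodule and a graded $B$-submodule (for the diagonal action $L$) of ${\rm CH}_*(A,V)$, and the quotient ${\rm QCH}_*(A,B,V):={\rm CH}_*(A,V)/J_*(A,B,V)$ is a differential graded $B$-module, i.e. the induced differential on it is $B$-linear.
   Context: $k$ is a field, all tensor products are over $k$, and $B$ is a bialgebra over $k$ with Sweedler notation $\Delta(b)=b_{(1)}\otimes b_{(2)}$ and counit $\varepsilon$. A $B$-module algebra is an associative $k$-algebra $A$ which is a left $B$-module with $b(a_1a_2)=b_{(1)}(a_1)b_{(2)}(a_2)$. A $B$-equivariant $A$-bimodule is an $A$-bimodule $V$ which is a left $B$-module with $b(av)=b_{(1)}(a)b_{(2)}(v)$ and $b(va)=b_{(1)}(v)b_{(2)}(a)$. The Hochschild complex ${\rm CH}_*(A,V)$ has ${\rm CH}_n(A,V)=A^{\otimes n}\otimes V$ with face maps $\partial_j$, $0\le j\le n$: $\partial_j(a_1\otimes\cdots\otimes a_n\otimes v)=(\cdots\otimes a_{j+1}a_{j+2}\otimes\cdots\otimes v)$ for $0\le j<n-1$, $\partial_{n-1}(\ldots)=a_1\otimes\cdots\otimes a_{n-1}\otimes a_nv$, $\partial_n(\ldots)=a_2\otimes\cdots\otimes a_n\otimes va_1$, and $d^{\rm CH}_n=\sum_{j=0}^n(-1)^j\partial_j$.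 $B$ acts diagonally: $L_b(a_1\otimes\cdots\otimes a_n\otimes v)=b_{(1)}(a_1)\otimes\cdots\otimes b_{(n)}(a_n)\otimes b_{(n+1)}(v)$; $[L_b,\partial_{n+1}]=L_b\partial_{n+1}-\partial_{n+1}L_b$. *)

From HB Require Import structures.
From mathcomp Require Import all_boot all_order all_algebra.
Set Implicit Arguments. Unset Strict Implicit. Unset Printing Implicit Defensive.
Import GRing.Theory.
Local Open Scope ring_scope.

(* Tensor products are not available in MathComp.  We encode an element of  *)
(* a tensor product as a formal finite sum of pure tensors (a list), and two *)
(* formal sums are identified iff they have the same image under EVERY       *)
(* multilinear map into EVERY k-vector space W (universal property of the    *)
(* tensor product).  Sweedler notation Delta(b) = sum b_(1) (x) b_(2) is      *)
(* encoded literally by a list  cop b : seq (B * B).                         *)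

Section Multilinear.
Variable k : fieldType.

Definition bilinear_map (U1 U2 W : lmodType k) (f : U1 -> U2 -> W) : Prop :=
  (forall c x x' y, f (c *: x + x') y = c *: f x y + f x' y) /\
  (forall c x y y', f x (c *: y + y') = c *: f x y + f x y').

Definition trilinear_map (U1 U2 U3 W : lmodType k) (f : U1 -> U2 -> U3 -> W) : Prop :=
  [/\ (forall c x x' y z, f (c *: x + x') y z = c *: f x y z + f x' y z),
      (forall c x y y' z, f x (c *: y + y') z = c *: f x y z + f x y' z) &
      (forall c x y z z', f x y (c *: z + z') = c *: f x y z + f x y z')].

End Multilinear.

Section Bialgebra.
Variables (k : fieldType) (B : algType k).

Definition is_bialgebra (cop : B -> seq (B * B)) (eps : B -> k) : Prop :=
  [/\
      (forall (W : lmodType k) (f : B -> B -> W), bilinear_map f ->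
         forall c b b', \sum_(p <- cop (c *: b + b')) f p.1 p.2
                        = c *: \sum_(p <- cop b) f p.1 p.2 + \sum_(p <- cop b') f p.1 p.2),
      (forall (W : lmodType k) (f : B -> B -> B -> W), trilinear_map f ->
         forall b, \sum_(p <- cop b) \sum_(q <- cop p.1) f q.1 q.2 p.2
                   = \sum_(p <- cop b) \sum_(q <- cop p.2) f p.1 q.1 q.2),
      [/\ (forall c b b', eps (c *: b + b') = c * eps b + eps b'),
          (forall b, \sum_(p <- cop b) eps p.1 *: p.2 = b) &
          (forall b, \sum_(p <- cop b) eps p.2 *: p.1 = b)],
      (forall (W : lmodType k) (f : B -> B -> W), bilinear_map f ->
         (forall b c, \sum_(p <- cop (b * c)) f p.1 p.2
                      = \sum_(p <- cop b) \sum_(q <- cop c) f (p.1 * q.1) (p.2 * q.2)) /\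
         \sum_(p <- cop 1) f p.1 p.2 = f 1 1) &
      (forall b c, eps (b * c) = eps b * eps c) /\ eps 1 = 1].

Definition is_Bmodule (M : lmodType k) (act : B -> M -> M) : Prop :=
  [/\ bilinear_map act,
      (forall b c m, act (b * c) m = act b (act c m)) &
      (forall m, act 1 m = m)].

Definition is_kalgebra (A : lmodType k) (mul : A -> A -> A) : Prop :=
  bilinear_map mul /\ associative mul.

Definition is_module_algebra (cop : B -> seq (B * B))
    (A : lmodType k) (mul : A -> A -> A) (actA : B -> A -> A) : Prop :=
  [/\ is_kalgebra mul, is_Bmodule actA &
      forall b a1 a2, actA b (mul a1 a2)
                      = \sum_(p <- cop b) mul (actA p.1 a1) (actA p.2 a2)].

Definition is_bimodule (A V : lmodType k) (mul : A -> A -> A)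
    (l : A -> V -> V) (r : V -> A -> V) : Prop :=
  [/\ bilinear_map l, bilinear_map r,
      (forall a a' v, l (mul a a') v = l a (l a' v)),
      (forall v a a', r v (mul a a') = r (r v a) a') &
      (forall a v a', r (l a v) a' = l a (r v a'))].

Definition is_equivariant_bimodule (cop : B -> seq (B * B))
    (A V : lmodType k) (mul : A -> A -> A) (actA : B -> A -> A)
    (l : A -> V -> V) (r : V -> A -> V) (actV : B -> V -> V) : Prop :=
  [/\ is_bimodule mul l r, is_Bmodule actV,
      (forall b a v, actV b (l a v) = \sum_(p <- cop b) l (actA p.1 a) (actV p.2 v)) &
      (forall b v a, actV b (r v a) = \sum_(p <- cop b) r (actV p.1 v) (actA p.2 a))].

End Bialgebra.

Section Hochschild.
Variables (k : fieldType) (B : algType k) (cop : B -> seq (B * B))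
  (A V : lmodType k) (mul : A -> A -> A) (actA : B -> A -> A)
  (l : A -> V -> V) (r : V -> A -> V) (actV : B -> V -> V).

(* pure tensor a_1 (x) ... (x) a_n (x) v, encoded as ([:: a_1; ...; a_n], v) *)
Definition ptensor : Type := (seq A * V)%type.
Definition fsum : Type := seq ptensor.

(* x represents an element of CH_n(A,V) = A^{(x) n} (x) V *)
Definition wf (n : nat) (x : fsum) : bool := all (fun p => size p.1 == n) x.

Definition multilinear (n : nat) (W : lmodType k) (f : seq A -> V -> W) : Prop :=
  (forall s, size s = n -> forall c v v', f s (c *: v + v') = c *: f s v + f s v') /\
  (forall s, size s = n -> forall i, (i < n)%N -> forall v c a a',
     f (set_nth 0 s i (c *: a + a')) v
     = c *: f (set_nth 0 s i a) v + f (set_nth 0 s i a') v).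

Definition teq (n : nat) (x y : fsum) : Prop :=
  forall (W : lmodType k) (f : seq A -> V -> W), multilinear n f ->
    \sum_(p <- x) f p.1 p.2 = \sum_(p <- y) f p.1 p.2.

Definition fscale (c : k) (x : fsum) : fsum := [seq (p.1, c *: p.2) | p <- x].
Definition fsub (x y : fsum) : fsum := x ++ fscale (-1) y.

(* face map partial_j on a pure tensor of degree n = size s (j <= n) *)
Definition face (j : nat) (p : ptensor) : ptensor :=
  let: (s, v) := p in
  if (j.+1 < size s)%N then
    (take j s ++ mul (nth 0 s j) (nth 0 s j.+1) :: drop j.+2 s, v)
  else if j.+1 == size s then (take j s, l (nth 0 s j) v)
  else (behead s, r v (nth 0 s 0)).

Definition faceF (j : nat) (x : fsum) : fsum := map (face j) x.

(* Hochschild differential d_n on CH_n (n >= 1) *)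
Definition dCH (n : nat) (x : fsum) : fsum :=
  flatten [seq fscale ((-1) ^+ j) (faceF j x) | j <- iota 0 n.+1].

(* diagonal action: b(a_1 (x) ... (x) a_n (x) v)
   = b_(1) a_1 (x) ... (x) b_(n) a_n (x) b_(n+1) v,
   with the iterated coproduct computed as (id (x) Delta^{(n-1)}) Delta *)
Fixpoint diag (b : B) (s : seq A) (v : V) {struct s} : fsum :=
  match s with
  | [::] => [:: ([::], actV b v)]
  | a :: s' => flatten [seq [seq (actA q.1 a :: p.1, p.2) | p <- diag q.2 s' v]
                       | q <- cop b]
  end.

Definition Lact (b : B) (x : fsum) : fsum := flatten [seq diag b p.1 p.2 | p <- x].

(* [L_b, partial_{n+1}] applied to y in CH_{n+1} *)
Definition commL (n : nat) (b : B) (y : fsum) : fsum :=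
  fsub (Lact b (faceF n.+1 y)) (faceF n.+1 (Lact b y)).

Definition inJ (n : nat) (x : fsum) : Prop :=
  wf n x /\
  exists ys : seq (B * fsum),
    all (fun q => wf n.+1 q.2) ys /\
    teq n x (flatten [seq commL n q.1 q.2 | q <- ys]).

End Hochschild.

From HB Require Import structures.
From mathcomp Require Import all_boot all_order all_algebra zify.
Set Implicit Arguments. Unset Strict Implicit. Unset Printing Implicit Defensive.
Import GRing.Theory.
Local Open Scope ring_scope.

(* Elements of CH_n(A,V) are formal sums identified by all multilinear
   functionals f, so every identity is proved after pulling f back along the
   operators involved: f o L_b, f o ∂_j and f o [L_b, ∂_(n+1)] are again
   multilinear.  The diagonal action is multiplicative (L_b L_c = L_(bc)) and
   commutes with every face but the last one: for ∂_0 this is the module-algebra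
   or equivariance axiom combined with coassociativity, and the inner faces
   follow by induction.  Hence [L_b, d] = ±[L_b, ∂_(n+1)] lies in J; L_b J ⊆ J
   because L_b [L_c, ∂] = [L_(bc), ∂] - [L_b, ∂] L_c; and d J ⊆ J because the
   simplicial identities ∂_j ∂_(n+2) = ∂_(n+1) ∂_(j+1) turn d [L_b, ∂_(n+2)]
   into a combination of commutators [L_b, ∂_(n+1)] applied to faces. *)

Section MultilinearForms.
Variables (k : fieldType) (A V : lmodType k).

Lemma linear0_map (U W : lmodType k) (phi : U -> W) :
  (forall c x y, phi (c *: x + y) = c *: phi x + phi y) -> phi 0 = 0.
Proof.
move=> phiL; apply: (addrI (phi 0)); rewrite addr0.
by have := phiL 1 0 0; rewrite !scale1r addr0 => <-.
Qed.

Lemma linear_sum_map (U W : lmodType k) (phi : U -> W) :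
  (forall c x y, phi (c *: x + y) = c *: phi x + phi y) ->
  forall (I : Type) (xs : seq I) (F : I -> U),
  phi (\sum_(i <- xs) F i) = \sum_(i <- xs) phi (F i).
Proof.
move=> phiL I xs F; elim: xs => [|i xs IH]; first by rewrite !big_nil (linear0_map phiL).
by rewrite !big_cons -IH -[phi (F i)]scale1r -phiL scale1r.
Qed.

Fixpoint mlinear (W : lmodType k) (n : nat) (f : seq A -> V -> W) : Prop :=
  match n with
  | 0 => forall c v v', f [::] (c *: v + v') = c *: f [::] v + f [::] v'
  | n'.+1 => (forall t, size t = n' -> forall v c a a',
                f ((c *: a + a') :: t) v = c *: f (a :: t) v + f (a' :: t) v) /\
             (forall a, mlinear n' (fun t w => f (a :: t) w))
  end.

Lemma mlinearP (W : lmodType k) n (f : seq A -> V -> W) :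
  mlinear n f <-> multilinear n f.
Proof.
elim: n f => [|n IH] f /=.
  split=> [fL|[fL _]]; last exact: fL.
  by split=> [[|//] _|//] c v v'; apply: fL.
split=> [[f_head f_tail]|[fV fA]]; first split.
- by move=> [|a t] //= [st] c v v'; have /IH [fV _] := f_tail a; apply: fV.
- move=> [|a t] //= [st] [|i] ltin v c x x' /=; first exact: f_head.
  by have /IH [_ fA] := f_tail a; apply: fA.
- split=> [t st v c a a'|a].
    by apply: (fA (a :: t) _ 0%N) => //=; rewrite st.
  apply/IH; split=> [s ss c v v'|s ss i ltin v c x x'].
    by apply: (fV (a :: s)) => /=; rewrite ss.
  by apply: (fA (a :: s) _ i.+1) => //=; rewrite ss.
Qed.

Lemma mlinear_lastV (W : lmodType k) n (f : seq A -> V -> W) s :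
  mlinear n f -> size s = n ->
  forall c v v', f s (c *: v + v') = c *: f s v + f s v'.
Proof. by move=> /mlinearP [fV _]; apply: fV. Qed.

Lemma mlinearZV (W : lmodType k) n (f : seq A -> V -> W) s c v :
  mlinear n f -> size s = n -> f s (c *: v) = c *: f s v.
Proof.
move=> fL ss; have fV := mlinear_lastV fL ss.
by rewrite -[c *: v]addr0 fV (linear0_map fV) addr0.
Qed.

Lemma eq_mlinear (W : lmodType k) n (f g : seq A -> V -> W) :
  (forall s v, size s = n -> f s v = g s v) -> mlinear n f -> mlinear n g.
Proof.
elim: n f g => [|n IH] f g efg /=.
  by move=> fL c v v'; rewrite -!efg //; apply: fL.
move=> [f_head f_tail]; split=> [t st v c a a'|a].
  by rewrite -!efg /= ?st //; apply: f_head.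
by apply: (IH _ _ _ (f_tail a)) => s v ss; apply: efg; rewrite /= ss.
Qed.

Lemma mlinear_comb (W : lmodType k) n c (f g : seq A -> V -> W) :
  mlinear n f -> mlinear n g -> mlinear n (fun s v => c *: f s v + g s v).
Proof.
elim: n f g => [|n IH] f g /=.
  by move=> fL gL d v v'; rewrite fL gL !scalerDr !scalerA mulrC addrACA.
move=> [f_head f_tail] [g_head g_tail]; split=> [t st v d a a'|a]; last exact: IH.
by rewrite f_head // g_head // !scalerDr !scalerA mulrC addrACA.
Qed.

Lemma mlinear_sum (W : lmodType k) n (I : Type) (xs : seq I)
    (F : I -> seq A -> V -> W) :
  (forall i, mlinear n (F i)) -> mlinear n (fun s v => \sum_(i <- xs) F i s v).
Proof.
move=> FL; elim: xs => [|i xs IH].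
  apply: (@eq_mlinear _ _ (fun _ _ => 0)) => [s v _|]; first by rewrite big_nil.
  by elim: n {FL} => [|n IHn] /=; [|split] => // *; rewrite scaler0 addr0.
apply: eq_mlinear (mlinear_comb 1 (FL i) IH) => s v _.
by rewrite big_cons scale1r.
Qed.

Lemma mlinear_compV (W : lmodType k) n (f : seq A -> V -> W) (phi : V -> V) :
  (forall c w w', phi (c *: w + w') = c *: phi w + phi w') ->
  mlinear n f -> mlinear n (fun s v => f s (phi v)).
Proof.
move=> phiL; elim: n f => [|n IH] f /=; first by move=> fL c v v'; rewrite phiL fL.
move=> [f_head f_tail]; split=> [t st v c a a'|a]; first exact: f_head.
exact: (IH (fun t w => f (a :: t) w)).
Qed.

Definition evalf (W : lmodType k) (f : seq A -> V -> W) (x : fsum A V) : W :=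
  \sum_(p <- x) f p.1 p.2.

Lemma teqP n (x y : fsum A V) :
  teq n x y <-> forall (W : lmodType k) (f : seq A -> V -> W),
                  mlinear n f -> evalf f x = evalf f y.
Proof. by split=> xy W f /mlinearP; apply: xy. Qed.

Lemma evalf_cat (W : lmodType k) (f : seq A -> V -> W) x y :
  evalf f (x ++ y) = evalf f x + evalf f y.
Proof. exact: big_cat. Qed.

Lemma evalf_flatten (W : lmodType k) (f : seq A -> V -> W) (I : Type) (ys : seq I)
    (h : I -> fsum A V) :
  evalf f (flatten [seq h q | q <- ys]) = \sum_(q <- ys) evalf f (h q).
Proof. by rewrite /evalf big_flatten big_map. Qed.

Lemma evalf_comb (W : lmodType k) (f g : seq A -> V -> W) c x :
  evalf (fun t w => c *: f t w + g t w) x = c *: evalf f x + evalf g x.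
Proof. by rewrite /evalf big_split scaler_sumr. Qed.

Lemma eq_evalf (W : lmodType k) (f g : seq A -> V -> W) n x :
  wf n x -> (forall t w, size t = n -> f t w = g t w) -> evalf f x = evalf g x.
Proof. by move=> /allP wx efg; apply: eq_big_seq => p /wx /eqP; apply: efg. Qed.

Lemma evalf_fscale (W : lmodType k) n (f : seq A -> V -> W) c x :
  wf n x -> mlinear n f -> evalf f (fscale c x) = c *: evalf f x.
Proof.
move=> /allP wx fL; rewrite /evalf big_map scaler_sumr; apply: eq_big_seq => p px.
by rewrite /= (mlinearZV _ _ fL) //; apply/eqP/wx.
Qed.

Lemma wf_cat n (x y : fsum A V) : wf n (x ++ y) = wf n x && wf n y.
Proof. exact: all_cat. Qed.

Lemma wf_fscale n c (x : fsum A V) : wf n (fscale c x) = wf n x.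
Proof. exact: all_map. Qed.

Lemma wf_flatten n (I : eqType) (ys : seq I) (h : I -> fsum A V) :
  (forall q, q \in ys -> wf n (h q)) -> wf n (flatten [seq h q | q <- ys]).
Proof.
move=> wh; apply/allP => p /flattenP [_ /mapP [q qys ->]].
by move/allP: (wh q qys); apply.
Qed.

End MultilinearForms.

Section Hochschild.
Variables (k : fieldType) (B : algType k) (cop : B -> seq (B * B)).
Variables (A V : lmodType k) (mul : A -> A -> A) (actA : B -> A -> A)
  (l : A -> V -> V) (r : V -> A -> V) (actV : B -> V -> V).

Local Notation face := (face mul l r).
Local Notation faceF := (faceF mul l r).
Local Notation dCH := (dCH mul l r).
Local Notation diag := (diag cop actA actV).
Local Notation Lact := (Lact cop actA actV).
Local Notation commL := (commL cop mul actA l r actV).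
Local Notation J := (inJ cop mul actA l r actV).

Definition comp_face (W : lmodType k) (f : seq A -> V -> W) j : seq A -> V -> W :=
  fun t w => f (face j (t, w)).1 (face j (t, w)).2.

Lemma comp_face_comp_face (W : lmodType k) (f : seq A -> V -> W) i j t w :
  comp_face (comp_face f i) j t w
  = f (face i (face j (t, w))).1 (face i (face j (t, w))).2.
Proof. by rewrite /comp_face -surjective_pairing. Qed.

Lemma size_face j (p : ptensor A V) : size (face j p).1 = (size p.1).-1.
Proof.
case: p => s v /=; case: ifP => [lt_j1s|_].
  by rewrite size_cat /= size_take size_drop ltnW //; lia.
case: ifP => [/eqP sz|_] /=; last by rewrite size_behead.
by rewrite size_take -sz ltnSn.
Qed.

Lemma face_cons j a t v : (j < size t)%N ->
  face j.+1 (a :: t, v) = (a :: (face j (t, v)).1, (face j (t, v)).2).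
Proof.
move=> ltjt /=; rewrite ltnS eqSS; case: ifP => // /negbT; rewrite -leqNgt => leqtj.
by have -> : j.+1 == size t by rewrite eqn_leq ltjt leqtj.
Qed.

Lemma face_last a t v : face (size t).+1 (a :: t, v) = (t, r v a).
Proof.
rewrite /=; have -> : ((size t).+2 < (size t).+1)%N = false by lia.
by have -> : ((size t).+2 == (size t).+1) = false by lia.
Qed.

Lemma face0_mul a a' t v : face 0 (a :: a' :: t, v) = (mul a a' :: t, v).
Proof. by rewrite /= drop0. Qed.

Lemma face0_l a v : face 0 ([:: a], v) = ([::], l a v).
Proof. by []. Qed.

Lemma wf_faceF n j (x : fsum A V) : wf n.+1 x -> wf n (faceF j x).
Proof.
by move=> /allP wx; apply/allP => _ /mapP [p /wx /eqP sp ->]; rewrite /= size_face sp.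
Qed.

Lemma evalf_faceF (W : lmodType k) (f : seq A -> V -> W) j x :
  evalf f (faceF j x) = evalf (comp_face f j) x.
Proof. by rewrite /evalf big_map; apply: eq_bigr => -[s v]. Qed.

Lemma wf_dCH n (x : fsum A V) : wf n.+1 x -> wf n (dCH n.+1 x).
Proof. by move=> wx; apply: wf_flatten => j _; rewrite wf_fscale wf_faceF. Qed.

Lemma evalf_dCH (W : lmodType k) n (f : seq A -> V -> W) x :
  wf n.+1 x -> mlinear n f ->
  evalf f (dCH n.+1 x) = \sum_(j <- iota 0 n.+2) (-1) ^+ j *: evalf (comp_face f j) x.
Proof.
move=> wx fL; rewrite evalf_flatten; apply: eq_bigr => j _.
by rewrite (evalf_fscale _ (wf_faceF j wx) fL) evalf_faceF.
Qed.

Hypothesis r_l : forall a v a', r (l a v) a' = l a (r v a').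
Hypothesis r_mul : forall v a a', r v (mul a a') = r (r v a) a'.

Lemma face_rV j t v a : (j < size t)%N ->
  face j (t, r v a) = ((face j (t, v)).1, r (face j (t, v)).2 a).
Proof.
move=> ltjt /=; case: ifP => // lt_j1t; case: ifP => [_|/negbT]; first by rewrite r_l.
by move: lt_j1t ltjt; lia.
Qed.

Lemma face_face_last m j s v : size s = m.+1 -> (j < m)%N ->
  face j (face m.+1 (s, v)) = face m (face j.+1 (s, v)).
Proof.
case: s => [|a t] // [<-] ltjt.
rewrite face_last face_rV // face_cons //.
have st : size t = (size (face j (t, v)).1).+1.
  by rewrite size_face prednK // (leq_trans (ltn0Sn j) ltjt).
by rewrite [in RHS]st face_last.
Qed.

Lemma face0_face_last m s v : size s = m.+1 -> (0 < m)%N ->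
  face m (face 0 (s, v)) = face m (face m.+1 (s, v)).
Proof.
case: s => [|a [|a' t]] // [<-] // _.
by rewrite face0_mul (face_last a (a' :: t)) !face_last r_mul.
Qed.

Hypothesis mul_bil : bilinear_map mul.
Hypothesis l_bil : bilinear_map l.
Hypothesis r_bil : bilinear_map r.

Lemma mlinear_face_last (W : lmodType k) n (f : seq A -> V -> W) :
  mlinear n f -> mlinear n.+1 (comp_face f n.+1).
Proof.
move=> fL; apply: (@eq_mlinear _ _ _ _ _ (fun s w => f (behead s) (r w (head 0 s)))).
  by move=> [|a t] // w [<-]; rewrite /comp_face face_last.
split=> [t st v c a a' /=|a /=]; first by rewrite r_bil.2 (mlinear_lastV fL).
exact: (mlinear_compV (fun c w w' => r_bil.1 c w w' a) fL).
Qed.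

Lemma mlinear_face (W : lmodType k) n (f : seq A -> V -> W) j :
  mlinear n f -> (j <= n.+1)%N -> mlinear n.+1 (comp_face f j).
Proof.
elim: n f j => [|n IH] f j fL.
  case: j => [_|[_|//]]; last exact: mlinear_face_last.
  split=> [[|//] _ v c a a'|a c v v']; rewrite /comp_face !face0_l /=.
    by rewrite l_bil.1 (mlinear_lastV fL).
  by rewrite l_bil.2 (mlinear_lastV fL).
rewrite leq_eqVlt => /orP [/eqP ->|]; first exact: mlinear_face_last.
case: j => [_|j ltjn].
  split=> [[|a1 t] // [st] v c a a'|a].
    by rewrite /comp_face !face0_mul /= mul_bil.1 fL.1.
  split=> [t st v c a1 a2|a1 /=]; first by rewrite /comp_face !face0_mul /= mul_bil.2 fL.1.
  have e t w : size t = n -> f (mul a a1 :: t) w = comp_face f 0 (a :: a1 :: t) w.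
    by rewrite /comp_face face0_mul.
  exact: eq_mlinear e (fL.2 _).
split=> [t st v c a a'|a].
  by rewrite /comp_face !face_cons ?st //; apply: fL.1; rewrite size_face /= st.
have e t w : size t = n.+1 ->
    comp_face (fun t w => f (a :: t) w) j t w = comp_face f j.+1 (a :: t) w.
  by move=> st; rewrite /comp_face face_cons // st.
exact (eq_mlinear e (IH _ j (fL.2 a) (ltnW ltjn))).
Qed.

Definition comp_diag (W : lmodType k) (f : seq A -> V -> W) b : seq A -> V -> W :=
  fun t w => evalf f (diag b t w).

Lemma comp_diag_nil (W : lmodType k) (f : seq A -> V -> W) b v :
  comp_diag f b [::] v = f [::] (actV b v).
Proof. exact: big_seq1. Qed.

Lemma comp_diag_cons (W : lmodType k) (f : seq A -> V -> W) b a s v :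
  comp_diag f b (a :: s) v
  = \sum_(q <- cop b) comp_diag (fun t w => f (actA q.1 a :: t) w) q.2 s v.
Proof. by rewrite /comp_diag evalf_flatten; apply: eq_bigr => q _; rewrite /evalf big_map. Qed.

Lemma wf_diag b s v : wf (size s) (diag b s v).
Proof.
elim: s b => [|a s IH] b //=; apply: wf_flatten => q _.
by apply/allP => _ /mapP [p /(allP (IH q.2)) /eqP sp ->] /=; rewrite sp.
Qed.

Lemma eq_comp_diag (W : lmodType k) (f g : seq A -> V -> W) b s v :
  (forall t w, size t = size s -> f t w = g t w) ->
  comp_diag f b s v = comp_diag g b s v.
Proof. exact: eq_evalf (wf_diag b s v). Qed.

Lemma comp_diag_comb (W : lmodType k) (f g : seq A -> V -> W) c b s v :
  comp_diag (fun t w => c *: f t w + g t w) b s v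
  = c *: comp_diag f b s v + comp_diag g b s v.
Proof. exact: evalf_comb. Qed.

Lemma comp_diag_sum (W : lmodType k) (I : Type) (xs : seq I)
    (F : I -> seq A -> V -> W) b s v :
  comp_diag (fun t w => \sum_(i <- xs) F i t w) b s v
  = \sum_(i <- xs) comp_diag (F i) b s v.
Proof. exact: exchange_big. Qed.

Lemma wf_Lact n b (x : fsum A V) : wf n x -> wf n (Lact b x).
Proof. by move=> /allP wx; apply: wf_flatten => p /wx /eqP <-; apply: wf_diag. Qed.

Lemma evalf_Lact (W : lmodType k) (f : seq A -> V -> W) b x :
  evalf f (Lact b x) = evalf (comp_diag f b) x.
Proof. exact: evalf_flatten. Qed.

Hypothesis cop_linear : forall (W : lmodType k) (f : B -> B -> W), bilinear_map f ->
  forall c b b', \sum_(p <- cop (c *: b + b')) f p.1 p.2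
                 = c *: \sum_(p <- cop b) f p.1 p.2 + \sum_(p <- cop b') f p.1 p.2.
Hypothesis actA_bil : bilinear_map actA.
Hypothesis actV_bil : bilinear_map actV.

Lemma mlinear_comp_diag (W : lmodType k) n (f : seq A -> V -> W) b :
  mlinear n f -> mlinear n (comp_diag f b).
Proof.
elim: n f b => [|n IH] f b /=.
  by move=> fL c v v'; rewrite !comp_diag_nil actV_bil.2 fL.
move=> [f_head f_tail]; split=> [t st v c a a'|a].
  rewrite !comp_diag_cons scaler_sumr -big_split; apply: eq_bigr => q _ /=.
  rewrite -comp_diag_comb; apply: eq_comp_diag => t' w st'.
  by rewrite actA_bil.2 f_head // st' st.
apply: (eq_mlinear _ (mlinear_sum (cop b) (fun q => IH _ q.2 (f_tail _)))).
by move=> t w _; rewrite comp_diag_cons.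
Qed.

Lemma comp_diag_linear_head (W : lmodType k) (f : seq A -> V -> W) a s v y :
  mlinear (size s).+1 f ->
  forall c x x', comp_diag (fun t w => f (actA (c *: x + x') a :: t) w) y s v
  = c *: comp_diag (fun t w => f (actA x a :: t) w) y s v
    + comp_diag (fun t w => f (actA x' a :: t) w) y s v.
Proof.
move=> [f_head _] c x x'; rewrite -comp_diag_comb; apply: eq_comp_diag => t w st.
by rewrite actA_bil.1 f_head.
Qed.

Lemma comp_diag_linear (W : lmodType k) (f : seq A -> V -> W) c b b' s v :
  mlinear (size s) f ->
  comp_diag f (c *: b + b') s v = c *: comp_diag f b s v + comp_diag f b' s v.
Proof.
elim: s f c b b' v => [|a s IH] f c b b' v fL.
  by rewrite !comp_diag_nil actV_bil.1 fL.
have bil : bilinear_map (fun x y => comp_diag (fun t w => f (actA x a :: t) w) y s v).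
  by split=> [d x x' y|x d y y']; [apply: comp_diag_linear_head | apply: IH; apply: fL.2].
by rewrite !comp_diag_cons (cop_linear bil).
Qed.

Lemma comp_diag_bilinear_head (W : lmodType k) (f : seq A -> V -> W) a s v :
  mlinear (size s).+1 f ->
  bilinear_map (fun x y : B => comp_diag (fun t w => f (actA x a :: t) w) y s v).
Proof.
move=> fL; split=> [c x x' y|x c y y']; first exact: comp_diag_linear_head.
by apply: comp_diag_linear; apply: fL.2.
Qed.

Hypothesis cop_mul : forall (W : lmodType k) (f : B -> B -> W), bilinear_map f ->
  forall b c, \sum_(p <- cop (b * c)) f p.1 p.2
              = \sum_(p <- cop b) \sum_(q <- cop c) f (p.1 * q.1) (p.2 * q.2).
Hypothesis actA_mul : forall b c a, actA (b * c) a = actA b (actA c a).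
Hypothesis actV_mul : forall b c v, actV (b * c) v = actV b (actV c v).

Lemma comp_diagM (W : lmodType k) (f : seq A -> V -> W) b c s v :
  mlinear (size s) f -> comp_diag (comp_diag f b) c s v = comp_diag f (b * c) s v.
Proof.
elim: s f b c v => [|a s IH] f b c v fL; first by rewrite !comp_diag_nil actV_mul.
rewrite comp_diag_cons [RHS]comp_diag_cons (cop_mul (comp_diag_bilinear_head a v fL)).
rewrite exchange_big /=; apply: eq_bigr => q _.
have IHq p : comp_diag (fun t w => f (actA (p.1 * q.1) a :: t) w) (p.2 * q.2) s v
    = comp_diag (comp_diag (fun t w => f (actA p.1 (actA q.1 a) :: t) w) p.2) q.2 s v.
  by rewrite -IH ?actA_mul //; apply: fL.2.
rewrite (eq_bigr _ (fun p _ => IHq p)) -comp_diag_sum.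
by apply: eq_comp_diag => t w _; rewrite comp_diag_cons.
Qed.

Hypothesis cop_coassoc : forall (W : lmodType k) (f : B -> B -> B -> W), trilinear_map f ->
  forall b, \sum_(p <- cop b) \sum_(q <- cop p.1) f q.1 q.2 p.2
            = \sum_(p <- cop b) \sum_(q <- cop p.2) f p.1 q.1 q.2.
Hypothesis actA_mul_distr : forall b a1 a2,
  actA b (mul a1 a2) = \sum_(p <- cop b) mul (actA p.1 a1) (actA p.2 a2).
Hypothesis actV_l_distr : forall b a v,
  actV b (l a v) = \sum_(p <- cop b) l (actA p.1 a) (actV p.2 v).

Lemma comp_face0_diag_l (W : lmodType k) (f : seq A -> V -> W) b a v :
  mlinear 0 f -> comp_face (comp_diag f b) 0 [:: a] v = comp_diag (comp_face f 0) b [:: a] v.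
Proof.
move=> fL; rewrite /comp_face face0_l /= comp_diag_nil comp_diag_cons actV_l_distr.
by rewrite (linear_sum_map fL); apply: eq_bigr => q _; rewrite comp_diag_nil.
Qed.

(* Coassociativity regroups (b_(1))_(1) a ⊗ (b_(1))_(2) a' ⊗ b_(2) s into
   b_(1) a ⊗ (b_(2))_(1) a' ⊗ (b_(2))_(2) s. *)
Lemma comp_face0_diag_mul (W : lmodType k) (f : seq A -> V -> W) b a a' s v :
  mlinear (size s).+1 f ->
  comp_face (comp_diag f b) 0 [:: a, a' & s] v
  = comp_diag (comp_face f 0) b [:: a, a' & s] v.
Proof.
move=> fL; rewrite {1}/comp_face face0_mul /= comp_diag_cons [RHS]comp_diag_cons.
pose g x y z := comp_diag (fun t w => f (mul (actA x a) (actA y a') :: t) w) z s v.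
have g_tri : trilinear_map g.
  split=> [c x x' y z|c x y y' z|c x y z z']; rewrite /g.
  - rewrite -comp_diag_comb; apply: eq_comp_diag => t w st.
    by rewrite actA_bil.1 mul_bil.1 fL.1.
  - rewrite -comp_diag_comb; apply: eq_comp_diag => t w st.
    by rewrite actA_bil.1 mul_bil.2 fL.1.
  - by rewrite comp_diag_linear //; apply: fL.2.
transitivity (\sum_(q <- cop b) \sum_(p <- cop q.1) g p.1 p.2 q.2).
  apply: eq_bigr => q _; rewrite -comp_diag_sum; apply: eq_comp_diag => t w st.
  rewrite actA_mul_distr (linear_sum_map (phi := fun x => f (x :: t) w)) //.
  by move=> c x y; apply: fL.1.
rewrite cop_coassoc //; apply: eq_bigr => q _; rewrite comp_diag_cons.
by apply: eq_bigr => p _; apply: eq_comp_diag => t w _; rewrite /comp_face face0_mul.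
Qed.

Lemma comp_face_diag (W : lmodType k) (f : seq A -> V -> W) b j s v :
  mlinear (size s).-1 f -> (j < size s)%N ->
  comp_face (comp_diag f b) j s v = comp_diag (comp_face f j) b s v.
Proof.
elim: s f b j v => [|a s IH] f b [|j] v // fL ltjs.
  by case: s {IH ltjs} fL => [|a' s] fL; [apply: comp_face0_diag_l | apply: comp_face0_diag_mul].
rewrite {1}/comp_face face_cons //= !comp_diag_cons.
apply: eq_bigr => q _.
have fqL : mlinear (size s).-1 (fun t w => f (actA q.1 a :: t) w).
  have := ltjs; move: fL => /=; rewrite ltnS.
  by case: (size s) => [_ //|m [_ f_tail] _]; apply: f_tail.
have := IH _ q.2 j v fqL ltjs; rewrite {1}/comp_face => ->.
by apply: eq_comp_diag => t w st; rewrite /comp_face face_cons // st.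
Qed.

Definition comp_comm (W : lmodType k) (f : seq A -> V -> W) b n : seq A -> V -> W :=
  fun s v => (-1) *: comp_diag (comp_face f n.+1) b s v + comp_face (comp_diag f b) n.+1 s v.

Lemma mlinear_comp_comm (W : lmodType k) n (f : seq A -> V -> W) b :
  mlinear n f -> mlinear n.+1 (comp_comm f b n).
Proof.
move=> fL; apply: mlinear_comb; first exact/mlinear_comp_diag/mlinear_face_last.
exact/mlinear_face_last/mlinear_comp_diag.
Qed.

Lemma wf_commL n b (y : fsum A V) : wf n.+1 y -> wf n (commL n b y).
Proof. by move=> wy; rewrite wf_cat wf_fscale !(wf_faceF, wf_Lact). Qed.

Lemma evalf_commL (W : lmodType k) n (f : seq A -> V -> W) b y :
  wf n.+1 y -> mlinear n f -> evalf f (commL n b y) = evalf (comp_comm f b n) y.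
Proof.
move=> wy fL; rewrite evalf_cat (evalf_fscale _ (wf_faceF _ (wf_Lact b wy)) fL).
by rewrite evalf_Lact !evalf_faceF evalf_Lact evalf_comb addrC.
Qed.

Lemma evalf_commL_fscale (W : lmodType k) n (f : seq A -> V -> W) b c y :
  wf n.+1 y -> mlinear n f ->
  evalf f (commL n b (fscale c y)) = c *: evalf (comp_comm f b n) y.
Proof.
move=> wy fL; rewrite evalf_commL ?wf_fscale //.
exact: evalf_fscale wy (mlinear_comp_comm b fL).
Qed.

Lemma comp_comm_diag (W : lmodType k) n (f : seq A -> V -> W) b c t w :
  mlinear n f -> size t = n.+1 ->
  comp_comm (comp_diag f b) c n t w
  = (-1) *: comp_diag (comp_comm f b n) c t w + comp_comm f (b * c) n t w.
Proof.
move=> fL st; rewrite /comp_comm comp_diag_comb.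
have sft : size (face n.+1 (t, w)).1 = n by rewrite size_face /= st.
rewrite {2 4}/comp_face comp_diagM ?sft // comp_diagM ?st; last exact: mlinear_face_last.
by rewrite !scaleN1r opprD opprK addrACA addrN add0r.
Qed.

Lemma comp_comm_face (W : lmodType k) n (f : seq A -> V -> W) b j s v :
  mlinear n f -> size s = n.+2 -> (j <= n)%N ->
  comp_comm (comp_face f j) b n.+1 s v = comp_face (comp_comm f b n) j.+1 s v.
Proof.
move=> fL ss lejn.
have E1 : comp_diag (comp_face (comp_face f j) n.+2) b s v
          = comp_face (comp_diag (comp_face f n.+1) b) j.+1 s v.
  rewrite comp_face_diag ?ss //; last exact: mlinear_face_last.
  by apply: eq_comp_diag => t u st; rewrite !comp_face_comp_face face_face_last // st.
have E2 : comp_face (comp_diag (comp_face f j) b) n.+2 s v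
          = comp_face (comp_face (comp_diag f b) n.+1) j.+1 s v.
  have sf : size (face n.+2 (s, v)).1 = n.+1 by rewrite size_face ss.
  rewrite -[LHS]/(comp_diag (comp_face f j) b (face n.+2 (s, v)).1 (face n.+2 (s, v)).2).
  rewrite -comp_face_diag ?sf //.
  rewrite -[LHS]/(comp_face (comp_face (comp_diag f b) j) n.+2 s v).
  by rewrite !comp_face_comp_face face_face_last // ss.
by rewrite /comp_comm E1 E2.
Qed.

Lemma comp_comm_face_last (W : lmodType k) n (f : seq A -> V -> W) b s v :
  mlinear n f -> size s = n.+2 ->
  comp_comm (comp_face f n.+1) b n.+1 s v
  = (-1) *: comp_face (comp_comm f b n) n.+2 s v + comp_face (comp_comm f b n) 0 s v.
Proof.
move=> fL ss.
have EP : comp_diag (comp_face (comp_face f n.+1) n.+2) b s v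
          = comp_face (comp_diag (comp_face f n.+1) b) 0 s v.
  rewrite comp_face_diag ?ss //; last exact: mlinear_face_last.
  by apply: eq_comp_diag => t u st; rewrite !comp_face_comp_face face0_face_last // st.
have EY : comp_face (comp_face (comp_diag f b) n.+1) 0 s v
          = comp_face (comp_face (comp_diag f b) n.+1) n.+2 s v.
  by rewrite !comp_face_comp_face face0_face_last // ss.
have unfold_comm i : comp_face (comp_comm f b n) i s v
    = (-1) *: comp_face (comp_diag (comp_face f n.+1) b) i s v
      + comp_face (comp_face (comp_diag f b) n.+1) i s v by [].
rewrite /comp_comm EP !unfold_comm EY !scaleN1r opprD opprK.
by rewrite addrACA addNr addr0 addrC.
Qed.

Lemma inJ_nil n : J n [::].
Proof. by split=> //; exists [::]; split=> //; apply/teqP. Qed.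

Lemma inJ_cat_scale n (x y : fsum A V) c : J n x -> J n y -> J n (x ++ fscale c y).
Proof.
move=> [wx [xs [wxs /teqP ex]]] [wy [ys [wys /teqP ey]]].
split; first by rewrite wf_cat wf_fscale wx wy.
exists (xs ++ [seq (q.1, fscale c q.2) | q <- ys]); split.
  by rewrite all_cat wxs all_map; apply: sub_all wys => q /= wq; rewrite wf_fscale.
apply/teqP => W f fL.
rewrite evalf_cat (evalf_fscale _ wy fL) (ex _ _ fL) (ey _ _ fL) map_cat flatten_cat evalf_cat.
rewrite !evalf_flatten big_map scaler_sumr; congr (_ + _); apply: eq_big_seq => q qys.
have wq : wf n.+1 q.2 by apply: (allP wys).
by rewrite (evalf_commL_fscale _ _ wq fL) (evalf_commL _ wq fL).
Qed.

Lemma inJ_Lact n b (x : fsum A V) : J n x -> J n (Lact b x).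
Proof.
move=> [wx [ys [wys /teqP ex]]]; split; first exact: wf_Lact.
exists (flatten [seq [:: (b * q.1, q.2); (b, fscale (-1) (Lact q.1 q.2))] | q <- ys]).
split.
  apply/allP => z /flattenP [zs /mapP [q /(allP wys) wq ->]].
  by rewrite !inE => /orP [] /eqP -> //=; rewrite wf_fscale wf_Lact.
apply/teqP => W f fL.
rewrite evalf_Lact (ex _ _ (mlinear_comp_diag b fL)) !evalf_flatten big_flatten big_map.
apply: eq_big_seq => q /(allP wys) wq; rewrite big_cons big_seq1 /=.
rewrite (evalf_commL _ wq (mlinear_comp_diag b fL)) (evalf_commL _ wq fL).
rewrite (evalf_commL_fscale _ _ (wf_Lact _ wq) fL) evalf_Lact addrC -evalf_comb.
by apply: (eq_evalf wq) => t w st; apply: comp_comm_diag.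
Qed.

Lemma iota0S n : iota 0 n.+1 = iota 0 n ++ [:: n].
Proof. by rewrite -addn1 iotaD. Qed.

Lemma inJ_Lact_dCH n b (x : fsum A V) :
  wf n.+1 x -> J n (fsub (Lact b (dCH n.+1 x)) (dCH n.+1 (Lact b x))).
Proof.
move=> wx; split.
  by rewrite /fsub wf_cat wf_fscale wf_Lact ?wf_dCH ?wf_Lact.
exists [:: (b, fscale ((-1) ^+ n.+1) x)]; split; first by rewrite /= wf_fscale wx.
apply/teqP => W f fL.
rewrite /fsub evalf_cat (evalf_fscale _ (wf_dCH (wf_Lact b wx)) fL) evalf_Lact.
rewrite (evalf_dCH wx (mlinear_comp_diag b fL)) (evalf_dCH (wf_Lact b wx) fL).
rewrite [in RHS]/= cats0 (evalf_commL_fscale _ _ wx fL) /comp_comm evalf_comb.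
rewrite iota0S !big_cat !big_seq1.
have inner : \sum_(j <- iota 0 n.+1) (-1) ^+ j *: evalf (comp_face (comp_diag f b) j) x
             = \sum_(j <- iota 0 n.+1) (-1) ^+ j *: evalf (comp_face f j) (Lact b x).
  apply: eq_big_seq => j; rewrite mem_iota add0n => /andP [_ ltjn].
  rewrite evalf_Lact; congr (_ *: _); apply: (eq_evalf wx) => t w st.
  by rewrite comp_face_diag // st.
rewrite inner evalf_Lact.
by rewrite !scaleN1r scalerDr scalerN opprD addrACA addrN add0r addrC.
Qed.

Lemma teq_dCH n (x y : fsum A V) :
  wf n.+1 x -> wf n.+1 y -> teq n.+1 x y -> teq n (dCH n.+1 x) (dCH n.+1 y).
Proof.
move=> wx wy /teqP exy; apply/teqP => W f fL.
rewrite (evalf_dCH wx fL) (evalf_dCH wy fL); apply: eq_big_seq => j.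
by rewrite mem_iota add0n => /andP [_ lejn]; rewrite exy //; apply: mlinear_face.
Qed.

Lemma evalf_dCH_flatten (W : lmodType k) n (f : seq A -> V -> W) (I : eqType)
    (ys : seq I) (h : I -> fsum A V) :
  (forall q, q \in ys -> wf n.+1 (h q)) -> mlinear n f ->
  evalf f (dCH n.+1 (flatten [seq h q | q <- ys])) = \sum_(q <- ys) evalf f (dCH n.+1 (h q)).
Proof.
move=> wh fL; rewrite evalf_dCH ?wf_flatten //.
under eq_bigr do rewrite evalf_flatten scaler_sumr.
by rewrite exchange_big; apply: eq_big_seq => q /wh wq; rewrite evalf_dCH.
Qed.

Definition dCH_commL_terms n (y : fsum A V) : seq (fsum A V) :=
  [seq fscale ((-1) ^+ j) (faceF j.+1 y) | j <- iota 0 n.+1] ++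
  [:: fscale ((-1) ^+ n.+1) (faceF 0 y); fscale (- (-1) ^+ n.+1) (faceF n.+2 y)].

Lemma wf_dCH_commL_terms n (y : fsum A V) :
  wf n.+2 y -> all (wf n.+1) (dCH_commL_terms n y).
Proof.
move=> wy; rewrite all_cat /= !wf_fscale !wf_faceF // !andbT.
by apply/allP => _ /mapP [j _ ->]; rewrite wf_fscale wf_faceF.
Qed.

Lemma evalf_dCH_commL (W : lmodType k) n (f : seq A -> V -> W) b y :
  wf n.+2 y -> mlinear n f ->
  evalf f (dCH n.+1 (commL n.+1 b y))
  = \sum_(z <- dCH_commL_terms n y) evalf f (commL n b z).
Proof.
move=> wy fL; rewrite (evalf_dCH (wf_commL b wy) fL) iota0S big_cat big_seq1.
rewrite /dCH_commL_terms big_cat big_map big_cons big_seq1; congr (_ + _).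
  apply: eq_big_seq => j; rewrite mem_iota add0n => /andP [_ ltjn].
  rewrite (evalf_commL_fscale _ _ (wf_faceF _ wy) fL) evalf_faceF.
  rewrite (evalf_commL _ wy (mlinear_face fL (ltnW ltjn))); congr (_ *: _).
  by apply: (eq_evalf wy) => t w st; apply: comp_comm_face.
rewrite !(evalf_commL_fscale _ _ (wf_faceF _ wy) fL) !evalf_faceF.
rewrite (evalf_commL _ wy (mlinear_face_last fL)).
rewrite (eq_evalf wy (fun t w st => comp_comm_face_last b w fL st)) evalf_comb.
by rewrite scalerDr scalerA mulrN1 scaleNr -scalerN addrC.
Qed.

Lemma inJ_dCH n (x : fsum A V) : J n.+1 x -> J n (dCH n.+1 x).
Proof.
move=> [wx [ys [wys exs]]]; split; first exact: wf_dCH.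
have wq q : q \in ys -> wf n.+2 q.2 by move/(allP wys).
have wX : wf n.+1 (flatten [seq commL n.+1 q.1 q.2 | q <- ys]).
  by apply: wf_flatten => q /wq; apply: wf_commL.
exists [seq (q.1, z) | q <- ys, z <- dCH_commL_terms n q.2]; split.
  apply/allP => _ /allpairsPdep [q [z [/wq wq2 zt ->]]].
  exact: allP (wf_dCH_commL_terms wq2) z zt.
apply/teqP => W f fL; move/teqP: (teq_dCH wx wX exs) => -> //.
rewrite evalf_dCH_flatten //; last by move=> q /wq; apply: wf_commL.
rewrite evalf_flatten big_allpairs_dep.
by apply: eq_big_seq => q /wq wq2; rewrite evalf_dCH_commL.
Qed.

End Hochschild.

Theorem proposition2p4 (k : fieldType) (B : algType k)
  (cop : B -> seq (B * B)) (eps : B -> k)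
  (A : lmodType k) (mul : A -> A -> A) (actA : B -> A -> A)
  (V : lmodType k) (l : A -> V -> V) (r : V -> A -> V) (actV : B -> V -> V) :
  is_bialgebra cop eps ->
  is_module_algebra cop mul actA ->
  is_equivariant_bimodule cop mul actA l r actV ->
  let J := inJ cop mul actA l r actV in
  let d := dCH mul l r in
  let L := Lact cop actA actV in
  [/\ (* J_n is a k-submodule of CH_n *)
      (forall n, J n [::]) /\
      (forall n x y c, J n x -> J n y -> J n (x ++ fscale c y)),
      (* J_* is stable under the differential *)
      (forall n x, J n.+1 x -> J n (d n.+1 x)),
      (* J_* is a graded B-submodule for the diagonal action *)
      (forall n b x, J n x -> J n (L b x)) &
      (* the induced differential on QCH = CH / J is B-linear:
         L_b d - d L_b maps CH_{n+1} into J_n *)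
      (forall n b x, wf n.+1 x -> J n (fsub (L b (d n.+1 x)) (d n.+1 (L b x))))].
Proof.
move=> [cop_linear cop_coassoc _ cop_alg _] [[mul_bil _] [actA_bil actA_mul _] actA_mul_distr]
  [[l_bil r_bil _ r_mul r_l] [actV_bil actV_mul _] actV_l_distr _] J d L.
have cop_mul W f (f_bil : bilinear_map f) := (cop_alg W f f_bil).1.
split; first split.
- exact: inJ_nil.
- by move=> n x y c; apply: inJ_cat_scale.
- by move=> n x; apply: inJ_dCH.
- by move=> n b x; apply: inJ_Lact.
- by move=> n b x; apply: inJ_Lact_dCH.
Qed.
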